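(* Let $d\ge2$, $n=3$, and let $f$ be a stable update function. For a configuration $\mathcal U^{(t)}$ of three opinions define $P^{(t)}:=\gamma_{12}^{(t)}+\gamma_{13}^{(t)}+\gamma_{23}^{(t)}$. If $\mathcal U^{(t+1)}$ is obtained from $\mathcal U^{(t)}$ by any single interaction, then $P^{(t+1)}\le P^{(t)}$.
   Context: Opinions are unit vectors in $\mathbb R^d$; a configuration is a tuple $(\vec u_1,\vec u_2,\vec u_3)$, $A_{ij}=\langle\vec u_i,\vec u_j\rangle$. An interaction $(i,j)$, $i\ne j$, replaces $\vec u_i$ by $\vec w/\|\vec w\|$ with $\vec w=\vec u_i+f(A_{ij})\vec u_j$, leaving other opinions unchanged. $f:[-1,1]\to\mathbb R$ is stable if continuous and $\operatorname{sign}f(A)=\operatorname{sign}A$ for all $A$. The angle is $\alpha(\vec u,\vec v)=\arccos\langle\vec u,\vec v\rangle\in[0,\pi]$ and the effective angle is $\gamma(\vec u,\vec v)=\min(\alpha(\vec u,\vec v),\pi-\alpha(\vec u,\vec v))$; $\gamma_{ij}^{(t)}=\gamma(\vec u_i^{(t)},\vec u_j^{(t)})$. *)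

From HB Require Import structures.
From mathcomp Require Import all_boot all_order all_algebra.
From mathcomp Require Import all_classical all_reals all_analysis.
Set Implicit Arguments. Unset Strict Implicit. Unset Printing Implicit Defensive.
Import Order.TTheory GRing.Theory Num.Theory.
Import numFieldNormedType.Exports.
Local Open Scope ring_scope.
Local Open Scope classical_set_scope.

Section Opinions.
Variable R : realType.

Definition dotp (d : nat) (u v : 'rV[R]_d) : R := \sum_(k < d) u 0 k * v 0 k.

Definition enorm (d : nat) (u : 'rV[R]_d) : R := Num.sqrt (dotp u u).

Definition unit_vec (d : nat) (u : 'rV[R]_d) : Prop := dotp u u = 1.

Definition config (d : nat) := 'I_3 -> 'rV[R]_d.

Definition is_config (d : nat) (U : config d) : Prop := forall k, unit_vec (U k).

Definition stable (f : R -> R) : Prop :=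
  {within `[-1, 1], continuous f} /\
  (forall A, -1 <= A <= 1 -> Num.sg (f A) = Num.sg A).

Definition angle (d : nat) (u v : 'rV[R]_d) : R := acos (dotp u v).
Definition eff_angle (d : nat) (u v : 'rV[R]_d) : R :=
  Num.min (angle u v) (pi - angle u v).

Definition interaction_w (f : R -> R) (d : nat) (U : config d) (i j : 'I_3)
  : 'rV[R]_d := U i + f (dotp (U i) (U j)) *: U j.

Definition interact (f : R -> R) (d : nat) (U : config d) (i j : 'I_3)
  : config d :=
  fun k => if k == i then (enorm (interaction_w f U i j))^-1 *: interaction_w f U i j
           else U k.

(* P = gamma_12 + gamma_13 + gamma_23 (0-based indices) *)
Definition potP (d : nat) (U : config d) : R :=
  eff_angle (U 0) (U 1) + eff_angle (U 0) (U 2%:R) + eff_angle (U 1) (U 2%:R).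

End Opinions.

(* On unit vectors the effective angle gamma(u, v) = acos |<u, v>| is the angle
   between the lines through u and v, and it satisfies the triangle inequality.
   Since f(A) A >= 0, the updated opinion w / |w| lies on the arc between u_i and
   +-u_j, so gamma(u_i', u_i) + gamma(u_i', u_j) = gamma(u_i, u_j).  For the third
   index k, the triangle inequality through u_i then gives
   gamma(u_i', u_j) + gamma(u_i', u_k) <= gamma(u_i, u_j) + gamma(u_i, u_k),
   while gamma(u_j, u_k) does not change. *)

From HB Require Import structures.
From mathcomp Require Import all_boot all_order all_algebra.
From mathcomp Require Import all_classical all_reals all_analysis.
From mathcomp Require Import ring lra.
Import Order.TTheory GRing.Theory Num.Theory.
Local Open Scope ring_scope.

Section InnerProduct.
Context {R : realType} {d : nat}.
Local Set Implicit Arguments.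
Local Unset Strict Implicit.
Implicit Types u v w : 'rV[R]_d.

Lemma dotpC u v : dotp u v = dotp v u.
Proof. by apply: eq_bigr => k _; rewrite mulrC. Qed.

Lemma dotpDl u v w : dotp (u + v) w = dotp u w + dotp v w.
Proof. by rewrite /dotp -big_split; apply: eq_bigr => k _; rewrite !mxE mulrDl. Qed.

Lemma dotpZl (a : R) u w : dotp (a *: u) w = a * dotp u w.
Proof. by rewrite /dotp mulr_sumr; apply: eq_bigr => k _; rewrite !mxE mulrA. Qed.

Lemma dotpNl u w : dotp (- u) w = - dotp u w.
Proof. by rewrite -scaleN1r dotpZl mulN1r. Qed.

Lemma dotpDr u v w : dotp w (u + v) = dotp w u + dotp w v.
Proof. by rewrite dotpC dotpDl !(dotpC w). Qed.

Lemma dotpZr (a : R) u w : dotp w (a *: u) = a * dotp w u.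
Proof. by rewrite dotpC dotpZl dotpC. Qed.

Lemma dotpNr u w : dotp w (- u) = - dotp w u.
Proof. by rewrite dotpC dotpNl dotpC. Qed.

Lemma dotpp_ge0 u : 0 <= dotp u u.
Proof. by apply: sumr_ge0 => k _; rewrite -expr2 sqr_ge0. Qed.

Lemma dotp_CauchySchwarz u v : dotp u v ^+ 2 <= dotp u u * dotp v v.
Proof.
pose S (F : 'I_d -> 'I_d -> R) := \sum_(i < d) \sum_(j < d) F i j.
have uuvv : dotp u u * dotp v v = S (fun i j => u 0 i ^+ 2 * v 0 j ^+ 2).
  rewrite /dotp mulr_suml; apply: eq_bigr => i _; rewrite mulr_sumr.
  by apply: eq_bigr => j _; ring.
have uv2 : dotp u v ^+ 2 = S (fun i j => u 0 i * v 0 i * (u 0 j * v 0 j)).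
  by rewrite /dotp expr2 mulr_suml; apply: eq_bigr => i _; rewrite mulr_sumr.
have uuvv_swap : dotp u u * dotp v v = S (fun i j => u 0 j ^+ 2 * v 0 i ^+ 2).
  by rewrite uuvv /S exchange_big.
have lagrange : S (fun i j => (u 0 i * v 0 j - u 0 j * v 0 i) ^+ 2)
    = dotp u u * dotp v v + dotp u u * dotp v v - dotp u v ^+ 2 *+ 2.
  rewrite {1}uuvv uuvv_swap uv2 /S -sumrMnl -big_split -sumrB.
  apply: eq_bigr => i _; rewrite -sumrMnl -big_split -sumrB.
  by apply: eq_bigr => j _; rewrite /= mulr2n; ring.
have : 0 <= S (fun i j => (u 0 i * v 0 j - u 0 j * v 0 i) ^+ 2).
  by apply: sumr_ge0 => i _; apply: sumr_ge0 => j _; rewrite sqr_ge0.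
rewrite lagrange mulr2n; lra.
Qed.

Lemma normr_dotp_le u v : `|dotp u v| <= enorm u * enorm v.
Proof.
rewrite /enorm -sqrtrM ?dotpp_ge0 // -sqrtr_sqr ler_sqrt ?dotp_CauchySchwarz //.
by rewrite mulr_ge0 ?dotpp_ge0.
Qed.

Lemma unit_dotp_bound u v : unit_vec u -> unit_vec v -> -1 <= dotp u v <= 1.
Proof.
move=> hu hv; rewrite -ler_norml.
by have := normr_dotp_le u v; rewrite /enorm hu hv sqrtr1 mulr1.
Qed.

Lemma unit_vecN u : unit_vec u -> unit_vec (- u).
Proof. by rewrite /unit_vec dotpNl dotpNr opprK. Qed.

Definition normalize w : 'rV[R]_d := (enorm w)^-1 *: w.

Lemma normalize_unit w : dotp w w != 0 -> unit_vec (normalize w).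
Proof.
move=> w0; have w_ge0 := dotpp_ge0 w.
rewrite /unit_vec /normalize dotpZl dotpZr /enorm mulrA -invfM -expr2.
by rewrite sqr_sqrtr // mulVf.
Qed.

(* Cosine form of the spherical triangle inequality: cos (a + b) <= cos c for
   the sides a, b, c of the triangle u v w. *)
Lemma unit_dotp_triangle u v w : unit_vec u -> unit_vec v -> unit_vec w ->
  dotp u v * dotp v w - Num.sqrt (1 - dotp u v ^+ 2) * Num.sqrt (1 - dotp v w ^+ 2)
  <= dotp u w.
Proof.
rewrite /unit_vec => hu hv hw.
set x := dotp u v; set y := dotp v w.
have := normr_dotp_le (u - x *: v) (w - y *: v); rewrite /enorm.
have -> : dotp (u - x *: v) (w - y *: v) = dotp u w - x * y.
  by rewrite !(dotpDl, dotpDr, dotpNl, dotpNr, dotpZl, dotpZr) hv -/x -/y; ring.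
have -> : dotp (u - x *: v) (u - x *: v) = 1 - x ^+ 2.
  by rewrite !(dotpDl, dotpDr, dotpNl, dotpNr, dotpZl, dotpZr) hv hu (dotpC v u) -/x; ring.
have -> : dotp (w - y *: v) (w - y *: v) = 1 - y ^+ 2.
  by rewrite !(dotpDl, dotpDr, dotpNl, dotpNr, dotpZl, dotpZr) hv hw (dotpC w v) -/y; ring.
have := ler_norm (- (dotp u w - x * y)); rewrite normrN; lra.
Qed.

End InnerProduct.

Lemma normrD_eq {R : realDomainType} (x y : R) :
  0 <= x * y -> `|x + y| = `|x| + `|y|.
Proof.
move=> xy_ge0; have [x_ge0|x_lt0] := lerP 0 x; have [y_ge0|y_lt0] := lerP 0 y.
- by rewrite !ger0_norm // addr_ge0.
- have -> : x = 0 by nra.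
  by rewrite add0r normr0 add0r.
- have -> : y = 0 by nra.
  by rewrite addr0 normr0 addr0.
- by rewrite !ltr0_norm ?opprD // ltr_nwDr // ltW.
Qed.

Section Arccos.
Context {R : realType}.
Local Set Implicit Arguments.
Local Unset Strict Implicit.
Implicit Types x y z t : R.

Lemma acos_le_of_cos_le z t : -1 <= z <= 1 -> 0 <= t <= pi ->
  cos t <= z -> acos z <= t.
Proof.
move=> hz ht cos_le; rewrite leNgt; apply/negP => t_lt.
have acos_itv : acos z \in `[0, pi] by rewrite in_itv /= acos_ge0 // acos_lepi.
have : cos (acos z) < cos t by rewrite ltr_cos // in_itv.
by rewrite acosK ?in_itv // ltNge cos_le.
Qed.

Lemma cos_acosD x y : -1 <= x <= 1 -> -1 <= y <= 1 ->
  cos (acos x + acos y) = x * y - Num.sqrt (1 - x ^+ 2) * Num.sqrt (1 - y ^+ 2).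
Proof. by move=> hx hy; rewrite cosD !acosK ?in_itv // !sin_acos. Qed.

Lemma acos_le_pihalf x : 0 <= x <= 1 -> acos x <= pi / 2.
Proof.
move=> /andP[x_ge0 x_le1]; apply: acos_le_of_cos_le.
- by rewrite x_le1 andbT (le_trans _ x_ge0) ?lerN10.
- by rewrite divr_ge0 ?pi_ge0 //= ler_pdivrMr // ler_peMr ?pi_ge0 // ler1n.
- by rewrite cos_pihalf.
Qed.

Lemma min_acos_pi x : -1 <= x <= 1 -> Num.min (acos x) (pi - acos x) = acos `|x|.
Proof.
move=> x_itv; have /andP[x_geN1 x_le1] := x_itv.
have pi_halves : pi / 2 + pi / 2 = pi :> R by field.
have [x_ge0|x_lt0] := lerP 0 x.
  rewrite ger0_norm //; apply: min_l.
  have : acos x <= pi / 2 by rewrite acos_le_pihalf // x_ge0.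
  lra.
rewrite ltr0_norm // acosN //; apply: min_r.
have : acos (- x) <= pi / 2 by rewrite acos_le_pihalf //; apply/andP; split; lra.
rewrite acosN //; lra.
Qed.

Lemma acos_le_acosD x y z : 0 <= x <= 1 -> 0 <= y <= 1 -> -1 <= z <= 1 ->
  x * y - Num.sqrt (1 - x ^+ 2) * Num.sqrt (1 - y ^+ 2) <= z ->
  acos z <= acos x + acos y.
Proof.
move=> /andP[x_ge0 x_le1] /andP[y_ge0 y_le1] z_itv cos_le.
have x_itv : -1 <= x <= 1 by apply/andP; split; lra.
have y_itv : -1 <= y <= 1 by apply/andP; split; lra.
have [sum_le|sum_gt] := lerP (acos x + acos y) pi; last first.
  exact: le_trans (acos_lepi _) (ltW sum_gt).
apply: acos_le_of_cos_le => //; last by rewrite cos_acosD.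
by rewrite sum_le andbT addr_ge0 // acos_ge0.
Qed.

(* If a = <u, v> >= 0 for unit vectors u, v and w = u + b v with b >= 0, then
   <w, u> = 1 + a b, <w, v> = a + b and |w|^2 = 1 + 2 a b + b^2: the angles from
   w to u and to v add up to the angle between u and v. *)
Lemma acos_split (a b : R) : 0 <= a <= 1 -> 0 <= b ->
  acos ((1 + a * b) / Num.sqrt (1 + a * b * 2 + b ^+ 2))
  + acos ((a + b) / Num.sqrt (1 + a * b * 2 + b ^+ 2)) = acos a.
Proof.
move=> /andP[a_ge0 a_le1] b_ge0.
set M := 1 + a * b * 2 + b ^+ 2; set N := Num.sqrt M.
have M_ge1 : 1 <= M by rewrite /M; nra.
have N_gt0 : 0 < N by rewrite sqrtr_gt0; lra.
have N2 : N ^+ 2 = M by rewrite sqr_sqrtr //; lra.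
set s := Num.sqrt (1 - a ^+ 2).
have s_ge0 : 0 <= s by apply: sqrtr_ge0.
have s2 : s ^+ 2 = 1 - a ^+ 2 by rewrite sqr_sqrtr //; nra.
set p := (1 + a * b) / N; set q := (a + b) / N.
have p_ge0 : 0 <= p by rewrite divr_ge0 //; nra.
have q_ge0 : 0 <= q by rewrite divr_ge0 //; nra.
have N_neq0 : N != 0 by rewrite gt_eqF.
have M_neq0 : M != 0 by rewrite gt_eqF //; lra.
have p2 : 1 - p ^+ 2 = (b * s / N) ^+ 2.
  by rewrite /p !expr_div_n exprMn N2 s2 /M; field; rewrite -/M.
have q2 : 1 - q ^+ 2 = (s / N) ^+ 2.
  by rewrite /q !expr_div_n N2 s2 /M; field; rewrite -/M.
have bsN_ge0 : 0 <= b * s / N by rewrite divr_ge0 ?mulr_ge0 // ltW.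
have sN_ge0 : 0 <= s / N by rewrite divr_ge0 // ltW.
have p_le1 : p <= 1 by nra.
have q_le1 : q <= 1 by nra.
have p_itv : -1 <= p <= 1 by apply/andP; split; lra.
have q_itv : -1 <= q <= 1 by apply/andP; split; lra.
have cos_sum : cos (acos p + acos q) = a.
  rewrite cos_acosD // p2 q2 !sqrtr_sqr !ger0_norm // /p /q.
  have -> : (1 + a * b) / N * ((a + b) / N) - b * s / N * (s / N)
     = ((1 + a * b) * (a + b) - b * s ^+ 2) / N ^+ 2 by field.
  by rewrite N2 s2 /M; field; rewrite -/M.
have p_half : acos p <= pi / 2 by rewrite acos_le_pihalf // p_ge0.
have q_half : acos q <= pi / 2 by rewrite acos_le_pihalf // q_ge0.
have pi_halves : pi / 2 + pi / 2 = pi :> R by field.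
rewrite -cos_sum cosK // in_itv /= addr_ge0 ?acos_ge0 //=; lra.
Qed.

End Arccos.

Section EffectiveAngle.
Context {R : realType} {d : nat}.
Local Set Implicit Arguments.
Local Unset Strict Implicit.
Implicit Types u v w : 'rV[R]_d.

Lemma eff_angleC u v : eff_angle u v = eff_angle v u.
Proof. by rewrite /eff_angle /angle dotpC. Qed.

Lemma eff_angle_unit u v :
  unit_vec u -> unit_vec v -> eff_angle u v = acos `|dotp u v|.
Proof. by move=> hu hv; rewrite /eff_angle /angle min_acos_pi // unit_dotp_bound. Qed.

Lemma eff_angle_triangle u v w : unit_vec u -> unit_vec v -> unit_vec w ->
  eff_angle u w <= eff_angle u v + eff_angle v w.
Proof.
move=> hu hv hw; rewrite !eff_angle_unit //.
have unit_norm_itv x y : unit_vec x -> unit_vec y -> 0 <= `|dotp x y| <= 1.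
  by move=> hx hy; rewrite normr_ge0 ler_norml unit_dotp_bound.
apply: acos_le_acosD; rewrite ?unit_norm_itv //.
  by rewrite (le_trans _ (normr_ge0 _)) ?lerN10 //= ler_norml unit_dotp_bound.
rewrite !real_normK ?num_real // -normrM.
(* the triangle inequality for u and for -u bounds both z and -z *)
have := unit_dotp_triangle hu hv hw.
have := unit_dotp_triangle (unit_vecN hu) hv hw; rewrite !dotpNl sqrrN mulNr.
set S := _ * Num.sqrt _; set z := dotp u w; set xy := _ * dotp v w.
have := ler_norm z; have := ler_norm (- z); rewrite normrN.
have [xy_ge0|xy_lt0] := lerP 0 xy; [rewrite ger0_norm // | rewrite ltr0_norm //]; lra.
Qed.

Lemma dotpp_addZ u v (c : R) : unit_vec u -> unit_vec v -> 0 <= c * dotp u v ->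
  dotp (u + c *: v) (u + c *: v) = 1 + `|dotp u v| * `|c| * 2 + `|c| ^+ 2.
Proof.
move=> hu hv cA_ge0.
rewrite !(dotpDl, dotpDr, dotpZl, dotpZr) hu hv (dotpC v u) -normrM.
by rewrite real_normK ?num_real // ger0_norm 1?mulrC //; ring.
Qed.

Lemma normalize_addZ_unit u v (c : R) :
  unit_vec u -> unit_vec v -> 0 <= c * dotp u v -> unit_vec (normalize (u + c *: v)).
Proof.
by move=> hu hv cA_ge0; apply/normalize_unit/lt0r_neq0; rewrite dotpp_addZ.
Qed.

Lemma eff_angle_normalize u v (c : R) :
  unit_vec u -> unit_vec v -> 0 <= c * dotp u v ->
  eff_angle (normalize (u + c *: v)) u + eff_angle (normalize (u + c *: v)) v
  = eff_angle u v.
Proof.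
move=> hu hv cA_ge0; set w := u + c *: v; set A := dotp u v.
have ww := dotpp_addZ hu hv cA_ge0; rewrite -/w -/A in ww.
have hw := normalize_addZ_unit hu hv cA_ge0; rewrite -/w in hw.
have N_inv_ge0 : 0 <= (enorm w)^-1 by rewrite invr_ge0 sqrtr_ge0.
have wu : `|dotp (normalize w) u| = (1 + `|A| * `|c|) / enorm w.
  rewrite dotpZl dotpDl dotpZl hu (dotpC v u) -/A normrM ger0_norm // mulrC.
  rewrite -normrM (mulrC A) (ger0_norm cA_ge0) ger0_norm //.
  exact: addr_ge0 ler01 cA_ge0.
have wv : `|dotp (normalize w) v| = (`|A| + `|c|) / enorm w.
  rewrite dotpZl dotpDl dotpZl hv mulr1 -/A normrM ger0_norm // mulrC.
  by rewrite normrD_eq // mulrC.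
rewrite !eff_angle_unit // wu wv /enorm ww.
by rewrite acos_split // normr_ge0 /= ler_norml unit_dotp_bound.
Qed.

Lemma eff_angle_between u v w u' :
  unit_vec u -> unit_vec w -> unit_vec u' ->
  eff_angle u' u + eff_angle u' v <= eff_angle u v ->
  eff_angle u' v + eff_angle u' w <= eff_angle u v + eff_angle u w.
Proof. by move=> hu hw hu' between; have := eff_angle_triangle hu' hu hw; lra. Qed.

End EffectiveAngle.

Lemma ord3_cases (i : 'I_3) : [\/ i = 0, i = 1 | i = 2%:R].
Proof.
case: i => [[|[|[|//]]] hi]; [constructor 1 | constructor 2 | constructor 3].
all: exact: val_inj.
Qed.

Lemma ord3_other (i j : 'I_3) : exists2 k : 'I_3, k != i & k != j.
Proof.
by case: (ord3_cases i) (ord3_cases j) => -> [] ->;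
  solve [by exists 0 | by exists 1 | by exists 2%:R].
Qed.

Lemma potP_pairs {R : realType} {d : nat} (U : config R d) {i j k : 'I_3} :
  i != j -> k != i -> k != j ->
  potP U = eff_angle (U i) (U j) + eff_angle (U i) (U k) + eff_angle (U j) (U k).
Proof.
rewrite /potP.
case: (ord3_cases i) (ord3_cases j) (ord3_cases k) => -> [] -> [] -> //= _ _ _.
all: rewrite ?(eff_angleC (U 1)) ?(eff_angleC (U 2%:R)); lra.
Qed.

Lemma stable_mul_ge0 {R : realType} {f : R -> R} {A : R} :
  stable f -> -1 <= A <= 1 -> 0 <= f A * A.
Proof. by case=> _ sg_f A_itv; rewrite -sgr_ge0 sgrM sg_f // -expr2 sqr_ge0. Qed.

Theorem mainTheorem17 (R : realType) (d : nat) (f : R -> R)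
  (U : config R d) (i j : 'I_3) :
  (2 <= d)%N -> stable f -> is_config U -> i != j ->
  interaction_w f U i j != 0 ->
  potP (interact f U i j) <= potP U.
Proof.
move=> _ f_stable hU ij _.
have [k ki kj] := ord3_other i j.
have fA_ge0 := stable_mul_ge0 f_stable (unit_dotp_bound (hU i) (hU j)).
set v := normalize (interaction_w f U i j).
have Vi : interact f U i j i = v by rewrite /interact eqxx.
have Vm m : m != i -> interact f U i j m = U m by rewrite /interact => /negbTE ->.
have v_unit : unit_vec v := normalize_addZ_unit (hU i) (hU j) fA_ge0.
rewrite (potP_pairs _ ij ki kj) (potP_pairs _ ij ki kj) Vi !Vm // 1?eq_sym //.
rewrite lerD2r; apply: eff_angle_between (hU i) (hU k) v_unit _.
by rewrite (eff_angle_normalize (hU i) (hU j) fA_ge0).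
Qed.
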